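(* Let $p$ and $q$ be distinct primes and $m>1$ an integer. Suppose $G$ is a finite non-abelian semi-direct product of a normal abelian Sylow $p$-subgroup $P$ by a cyclic $q$-complement $Q$, where $P$ is the direct product of a cyclic group $C$ of order $p^m$ and an elementary abelian $p$-group $A$. Suppose $Q$ centralises $C$ and acts (by conjugation) irreducibly on $A$, and that $|G:\mathbf{C}_G(P)|=q$. Then $G$ is exponent-critical.
   Context: A finite group $G$ is exponent-critical if $\exp(G)$ is not the least common multiple of the exponents of the proper non-abelian subgroups of $G$. *)

From mathcomp Require Import all_boot all_fingroup all_solvable.
Set Implicit Arguments. Unset Strict Implicit. Unset Printing Implicit Defensive.
Local Open Scope group_scope.

Definition exponent_critical (gT : finGroupType) (G : {group gT}) : bool :=
  exponent G != \big[lcmn/1%N]_(H : {group gT} | (H \proper G) && ~~ abelian H)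
                   exponent H.

(* exp(G) is divisible by |C| = p^m, so it suffices that no proper non-abelian
   subgroup H has exponent divisible by p^m.  Since C_G(P) = P C_Q(P) is abelian
   and has prime index in G = P >< Q with Q a cyclic q-group, every non-abelian
   H <= G satisfies HP = G.  As G' <= A and H' <> 1, the intersection of H and A
   is a nontrivial subgroup of A normalised by HP = G, hence by Q, so A <= H by
   irreducibility.  If H also contained an element ca (c in C, a in A) of order
   p^m, then, as a^p = 1 and m > 1, c would have order p^m and generate C; so
   c in H, P = CA <= H and H = HP = G. *)

From mathcomp Require Import all_boot all_fingroup all_solvable.
Set Implicit Arguments. Unset Strict Implicit. Unset Printing Implicit Defensive.

Lemma pfactor_dvdn_lcm p k a b :
  prime p -> (p ^ k %| lcmn a b) = (p ^ k %| a) || (p ^ k %| b).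
Proof.
move=> p_pr; have [-> | a_gt0] := posnP a; first by rewrite lcm0n dvdn0.
have [-> | b_gt0] := posnP b; first by rewrite lcmn0 !dvdn0 orbT.
by rewrite !pfactor_dvdn ?lcmn_gt0 ?a_gt0 // logn_lcm // leq_max.
Qed.

Lemma pfactor_dvdn_biglcm (I : finType) (P : pred I) (F : I -> nat) p k :
    prime p -> 0 < k ->
  p ^ k %| \big[lcmn/1]_(i | P i) F i -> exists2 i, P i & p ^ k %| F i.
Proof.
move=> p_pr k_gt0.
apply: (big_ind (fun n => p ^ k %| n -> exists2 i, P i & p ^ k %| F i)).
- by rewrite dvdn1 -(expn0 p) eqn_exp2l ?prime_gt1 // eqn0Ngt k_gt0.
- by move=> a b IHa IHb; rewrite pfactor_dvdn_lcm // => /orP[/IHa | /IHb].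
- by move=> i; exists i.
Qed.

Local Open Scope group_scope.

Section Groups.
Variable gT : finGroupType.

Lemma exponent_pfactor_witness (H : {group gT}) p k :
  prime p -> 0 < k -> (p ^ k)%N %| exponent H -> exists2 y, y \in H & #[y] = (p ^ k)%N.
Proof.
move=> p_pr k_gt0 /(pfactor_dvdn_biglcm p_pr k_gt0)[x Hx /dvdnP[d ox]].
have d_gt0 : 0 < d by move: (order_gt0 x); rewrite ox muln_gt0 => /andP[].
by exists (x ^+ d); rewrite ?groupX // orderXdiv ox ?dvdn_mulr // mulKn.
Qed.

Lemma order_mul_pfactor p m (c a : gT) :
    prime p -> 1 < m -> commute c a -> #[c] %| (p ^ m)%N -> a ^+ p = 1 ->
  #[c * a] = (p ^ m)%N -> #[c] = (p ^ m)%N.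
Proof.
move=> p_pr m_gt1 cca oc_dvd ap1 oca.
have /(dvdn_pfactor _ _ p_pr)[j j_le_m oc] := oc_dvd; rewrite oc; congr (expn _ _).
apply/eqP; rewrite eqn_leq j_le_m leqNgt; apply/negP => j_lt_m.
have p_dvd : p %| (p ^ m.-1)%N by rewrite dvdn_exp // -ltnS prednK // ltnW.
suff: #[c * a] %| (p ^ m.-1)%N.
  by rewrite oca dvdn_Pexp2l ?prime_gt1 // -ltnS prednK ?ltnn // ltnW.
rewrite order_dvdn expgMn //; apply/eqP.
have /eqP-> : c ^+ (p ^ m.-1)%N == 1.
  by rewrite -order_dvdn oc dvdn_exp2l // -ltnS prednK // ltnW.
by rewrite mul1g; apply/eqP; rewrite -order_dvdn (dvdn_trans _ p_dvd) // order_dvdn ap1.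
Qed.

Lemma cyclic_pgroup_proper_sub q (Q X Y : {group gT}) :
    prime q -> cyclic Q -> q.-group Q ->
  X \proper Q -> Y \subset Q -> #|Q : Y| = q -> X \subset Y.
Proof.
move=> q_pr cycQ qQ ltXQ sYQ iYQ; have sXQ := proper_sub ltXQ.
rewrite -(cardSg_cyclic cycQ) //; have := proper_card ltXQ.
rewrite -(Lagrange sYQ) iYQ (card_pgroup (pgroupS sXQ qQ)).
rewrite (card_pgroup (pgroupS sYQ qQ)) -expnSr ltn_exp2l ?prime_gt1 //.
by rewrite ltnS => /dvdn_exp2l.
Qed.

Section CyclicActionOnAbelianSylow.

Variables (p q m : nat) (G P Q C A : {group gT}).
Hypotheses (p_pr : prime p) (q_pr : prime q) (m_gt1 : 1 < m).
Hypotheses (sylP : p.-Sylow(G) P) (abP : abelian P).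
Hypotheses (cycQ : cyclic Q) (qQ : q.-group Q) (defG : P ><| Q = G).
Hypotheses (defP : C \x A = P) (oC : #|C| = (p ^ m)%N) (abelA : p.-abelem A).
Hypotheses (cQC : Q \subset 'C(C)) (irrA : acts_irreducibly Q A 'J).
Hypothesis iCP : #|G : 'C_G(P)| = q.

Let nsPG : P <| G. Proof. by case/sdprod_context: defG. Qed.
Let sQG : Q \subset G. Proof. by have [_ /mulG_sub[]] := sdprodP defG. Qed.
Let sCP : C \subset P. Proof. by have [_ /mulG_sub[]] := dprodP defP. Qed.
Let sAP : A \subset P. Proof. by have [_ /mulG_sub[]] := dprodP defP. Qed.

Lemma normsGA : G \subset 'N(A).
Proof.
have [_ <- _ _] := sdprodP defG; apply: mul_subG; first exact: sub_abelian_norm.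
by case/mingroupP: irrA => /andP[_]; rewrite astabsJ.
Qed.

Lemma der1_subA : G^`(1) \subset A.
Proof.
apply: der1_min normsGA _.
have [_ <- _ _] := sdprodP defG; have [_ <- _ _] := dprodP defP.
rewrite quotientMl; last by rewrite (dprodW defP) sub_abelian_norm.
rewrite quotientMidr abelianM !quotient_abelian ?(abelianS sCP abP) ?cyclic_abelian //.
exact: quotient_cents.
Qed.

Lemma centGP : 'C_G(P) = P * 'C_Q(P).
Proof. by have [_ defPQ _ _] := sdprodP defG; rewrite group_modl // defPQ setIC. Qed.

Lemma abelian_centGP : abelian 'C_G(P).
Proof.
by rewrite centGP abelianM abP subsetIr (abelianS (subsetIl _ _) (cyclic_abelian cycQ)).
Qed.

Lemma index_centQ : #|Q : 'C_Q(P)| = q.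
Proof.
have [_ _ _ tiPQ] := sdprodP defG.
have tiPCQ : P :&: 'C_Q(P) = 1 by apply/trivgP; rewrite -tiPQ setIS ?subsetIl.
have := Lagrange (subsetIl G 'C(P)); rewrite iCP /= centGP TI_cardMg //.
rewrite -(sdprod_card defG) -(Lagrange (subsetIl Q 'C(P))) -!mulnA => /eqP.
by rewrite !eqn_pmul2l ?cardG_gt0 // => /eqP.
Qed.

Lemma overgroupP_not_centP_eq (K : {group gT}) :
  P \subset K -> K \subset G -> ~~ (K \subset 'C(P)) -> K :=: G.
Proof.
move=> sPK sKG; have [_ defPQ _ _] := sdprodP defG.
have [sQK | nsQK] := boolP (Q \subset K).
  by move=> _; apply/eqP; rewrite eqEsubset sKG -defPQ mul_subG.
have defK : P * (Q :&: K) = K by rewrite group_modl // defPQ; apply/setIidPr.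
have ltQK_Q : Q :&: K \proper Q by rewrite properE subsetIl subsetI subxx.
have sQKCQ := cyclic_pgroup_proper_sub q_pr cycQ qQ ltQK_Q (subsetIl Q 'C(P)) index_centQ.
by case/negP; rewrite -defK mul_subG // (subset_trans sQKCQ) ?subsetIr.
Qed.

Lemma nonabelian_joinP (H : {group gT}) :
  H \subset G -> ~~ abelian H -> H <*> P = G.
Proof.
move=> sHG nabH; apply: overgroupP_not_centP_eq; first exact: joing_subr.
  by rewrite join_subG sHG normal_sub.
apply: contra nabH; rewrite join_subG => /andP[cHP _].
by apply: abelianS abelian_centGP; rewrite subsetI sHG.
Qed.

Lemma nonabelian_subA (H : {group gT}) : H \subset G -> ~~ abelian H -> A \subset H.
Proof.
move=> sHG nabH; case/mingroupP: irrA => _ minA.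
have ntHA : H :&: A != 1.
  apply: contra nabH => /eqP tiHA; apply/derG1P/trivgP; rewrite -tiHA.
  by rewrite subsetI der_sub (subset_trans (dergS 1 sHG) der1_subA).
have nHA_G : G \subset 'N(H :&: A).
  rewrite -(nonabelian_joinP sHG nabH) join_subG.
  rewrite normsI ?normG ?(subset_trans sHG normsGA) //=.
  by rewrite sub_abelian_norm // subIset // sAP orbT.
have <- : (H :&: A)%G :=: A.
  by apply: minA; rewrite ?subsetIr // ntHA astabsJ (subset_trans sQG).
exact: subsetIl.
Qed.

Lemma exponent_proper_nonabelian (H : {group gT}) :
  H \proper G -> ~~ abelian H -> ~~ ((p ^ m)%N %| exponent H).
Proof.
move=> ltHG nabH; have sHG := proper_sub ltHG; apply/negP.
case/(exponent_pfactor_witness p_pr (ltnW m_gt1)) => y Hy oy.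
have Py : y \in P.
  by rewrite (mem_normal_Hall sylP nsPG) ?(subsetP sHG) // /p_elt oy pnatX pnat_id.
have [c [a [Cc Aa defy _]]] := mem_dprod defP Py; rewrite {y Py}defy in Hy oy.
have cca : commute c a := centsP abP c (subsetP sCP c Cc) a (subsetP sAP a Aa).
have ap1 : a ^+ p = 1.
  apply/eqP; rewrite -order_dvdn (dvdn_trans (dvdn_exponent Aa)) //.
  by move: abelA; rewrite abelemE // => /andP[].
have oc_dvd : #[c] %| (p ^ m)%N by rewrite -oC order_dvdG.
have oc := order_mul_pfactor p_pr m_gt1 cca oc_dvd ap1 oy.
have defC : <[c]> = C by apply/eqP; rewrite eqEcard cycle_subG Cc -orderE oc /= oC.
have sAH := nonabelian_subA sHG nabH.
have Hc : c \in H by rewrite -(mulgK a c) groupM ?groupV // (subsetP sAH).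
have sPH : P \subset H by rewrite -(dprodW defP) mul_subG // -defC cycle_subG.
by move: ltHG; rewrite -(nonabelian_joinP sHG nabH) (joing_idPl sPH) properxx.
Qed.

End CyclicActionOnAbelianSylow.

End Groups.

Theorem mainTheorem9 (gT : finGroupType) (p q m : nat)
    (G P Q C A : {group gT}) :
  prime p -> prime q -> p != q -> (1 < m)%N ->
  ~~ abelian G ->
  p.-Sylow(G) P -> P <| G -> abelian P ->
  cyclic Q -> q.-group Q ->
  P ><| Q = G ->
  C \x A = P -> cyclic C -> #|C| = (p ^ m)%N -> p.-abelem A ->
  Q \subset 'C(C) ->
  acts_irreducibly Q A 'J ->
  #|G : 'C_G(P)| = q ->
  exponent_critical G.
Proof.
move=> p_pr q_pr _ m_gt1 _ sylP nsPG abP cycQ qQ defG defP cycC oC abelA cQC irrA iCP.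
have sCG : C \subset G.
  by rewrite (subset_trans _ (normal_sub nsPG)) // -(dprodW defP) mulG_subl.
have pm_dvd_expG : (p ^ m %| exponent G)%N by rewrite -oC -exponent_cyclic ?exponentS.
apply/eqP => expG; move: pm_dvd_expG; rewrite expG.
case/(pfactor_dvdn_biglcm p_pr (ltnW m_gt1)) => H /andP[ltHG nabH]; apply/negP.
exact: (exponent_proper_nonabelian p_pr q_pr m_gt1 sylP abP cycQ qQ defG defP oC
          abelA cQC irrA iCP ltHG nabH).
Qed.
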